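(* Let $\Delta$ be a balanced, non-degenerate, even multiset in $\mathbb{Z}^2\setminus\{(0,0)\}$ and let $\rho>0$ be such that, for each side $\sigma$ of $P_\Delta$, the complement in $\operatorname{Tor}^+_{\mathbb{R}}(\sigma)$ of the $\rho$-neighborhoods of its endpoints is non-empty. Then the metric closure $\overline{\operatorname{Men}}{}^\rho_{\mathbb{R}}(\Delta)$ of $\operatorname{Men}^\rho_{\mathbb{R}}(\Delta)$ in $\prod_{\sigma\in P^1_\Delta}(\operatorname{Tor}^+_{\mathbb{R}}(\sigma))^{n^\sigma}$ is diffeomorphic to a convex polytope.
   Context: Notation: $\Delta$ balanced (elements sum to $0$), non-degenerate (elements span $\mathbb{R}^2$), even ($\Delta\subset(2\mathbb{Z})^2$). $P_\Delta$ is the convex lattice polygon whose counterclockwise oriented boundary is obtained by concatenating the vectors of $\Delta$ rotated counterclockwise by $\pi/2$; $P^1_\Delta$ its set of sides; for $\sigma\in P^1_\Delta$, $\boldsymbol a^\sigma_1,\dots,\boldsymbol a^\sigma_{n^\sigma}$ are the elements of $\Delta$ that are outer normals to $\sigma$, with lattice lengths $2k^\sigma_i$. $\operatorname{Tor}(P_\Delta)$ is the complex toric surface with its tautological real structure; its closed positive quadrant $\operatorname{Tor}^+_{\mathbb{R}}(P_\Delta)$ (closure of $(\mathbb{R}_{>0})^2$) is identified with $P_\Delta$ by the moment map, and it carries the metric pulled back from $P_\Delta\subset\mathbb{R}^2$. For a side $\sigma$, $\operatorname{Tor}(\sigma)$ is its toric divisor, $\operatorname{Tor}(\sigma)^\times$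 the dense orbit, and $\operatorname{Tor}^+_{\mathbb{R}}(\sigma)=\operatorname{Tor}(\sigma)\cap\partial\operatorname{Tor}^+_{\mathbb{R}}(P_\Delta)$ (a closed segment). Fix a linear functional $\lambda:\mathbb{R}^2\to\mathbb{R}$ injective on $\mathbb{Z}^2$; its maximum and minimum points on $P_\Delta$ split $\partial P_\Delta$ into two broken lines $B',B''$, and orient each side from its $\lambda$-minimal to its $\lambda$-maximal point. An automorphism of $\mathbb{Z}^2$ sending an oriented side $\sigma$ onto the segment $[0,\|\sigma\|_{\mathbb{Z}}]$ of the first axis identifies $\operatorname{Tor}(\sigma)^\times$ with $\mathbb{C}^\times$, taking the positive real half-axis of $\operatorname{Tor}(\sigma)^\times$ (the interior of $\operatorname{Tor}^+_{\mathbb{R}}(\sigma)$) onto $\mathbb{R}_{>0}$; let $\xi^\sigma_i$ be the resulting coordinate of a point $z^\sigma_i\in\operatorname{Tor}(\sigma)^\times$. Let $k_0=\gcd\{k^\sigma_i\}$. $\operatorname{Men}(\Delta)_{red}$ is the set of sequences $(z^\sigma_i)$, $z^\sigma_i\in\operatorname{Tor}(\sigma)^\times$, with $\prod_{\sigma\subset B'}\prod_i(\xi^\sigma_i)^{k^\sigma_i/k_0}=\prod_{\sigma\subset B''}\prod_i(\xi^\sigma_i)^{k^\sigma_i/k_0}$. $\operatorname{Men}^\rho_{\mathbb{R}}(\Delta)$ is the set of sequences in $\operatorname{Men}(\Delta)_{red}$ such that every point $z^\sigma_i$ lies in $\operatorname{Tor}^+_{\mathbb{R}}(\sigma)$ at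 distance $\ge\rho$ from the endpoints of $\operatorname{Tor}^+_{\mathbb{R}}(\sigma)$. *)

From HB Require Import structures.
From mathcomp Require Import all_boot all_order all_algebra.
From mathcomp Require Import all_classical all_reals all_analysis.

Set Implicit Arguments.
Unset Strict Implicit.
Unset Printing Implicit Defensive.

Import Order.TTheory GRing.Theory Num.Theory.
Import numFieldNormedType.Exports.
Local Open Scope ring_scope.
Local Open Scope classical_set_scope.

Fixpoint iter_dir (R : realType) (n m : nat) (vs : seq 'rV[R]_n)
    (f : 'rV[R]_n -> 'rV[R]_m) : 'rV[R]_n -> 'rV[R]_m :=
  match vs with
  | [::] => f
  | v :: vs' => fun x => 'D_v (iter_dir vs' f) x
  end.

Definition smooth_on (R : realType) (n m : nat) (U : set 'rV[R]_n)
    (f : 'rV[R]_n -> 'rV[R]_m) : Prop :=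
  open U /\
  forall (vs : seq 'rV[R]_n) (x : 'rV[R]_n), U x ->
    {for x, continuous (iter_dir vs f)} /\
    forall v : 'rV[R]_n, derivable (iter_dir vs f) x v.

(* smoothness of a map defined on an arbitrary subset M (Milnor / Guillemin-Pollack):
   locally it extends to a C^oo map on an open neighbourhood *)
Definition smooth_on_subset (R : realType) (n m : nat) (M : set 'rV[R]_n)
    (f : 'rV[R]_n -> 'rV[R]_m) : Prop :=
  forall x, M x -> exists (U : set 'rV[R]_n) (F : 'rV[R]_n -> 'rV[R]_m),
    U x /\ smooth_on U F /\ forall y, M y -> U y -> F y = f y.

Definition diffeomorphic (R : realType) (n m : nat) (M : set 'rV[R]_n)
    (Q : set 'rV[R]_m) : Prop :=
  exists (f : 'rV[R]_n -> 'rV[R]_m) (g : 'rV[R]_m -> 'rV[R]_n),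
    [/\ forall x, M x -> Q (f x),
        forall y, Q y -> M (g y),
        forall x, M x -> g (f x) = x,
        forall y, Q y -> f (g y) = y &
        smooth_on_subset M f /\ smooth_on_subset Q g].

Definition convex_polytope (R : realType) (m : nat) (Q : set 'rV[R]_m) : Prop :=
  exists vs : seq 'rV[R]_m,
    Q = [set x | exists w : 'I_(size vs) -> R,
           [/\ forall i, 0 <= w i, \sum_i w i = 1 &
               x = \sum_i w i *: vs`_(val i)]].

(* Delta is given as a family a : 'I_n -> Z^2 (repetitions allowed) *)
Definition zvec := (int * int)%type.

Definition latlen (v : zvec) : nat := gcdn `|v.1|%N `|v.2|%N.

Definition zdet (u v : zvec) : int := u.1 * v.2 - u.2 * v.1.
Definition zdot (u v : zvec) : int := u.1 * v.1 + u.2 * v.2.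

(* u and v point in the same direction, i.e. are outer normals of the same side *)
Definition same_dir (u v : zvec) : bool := (zdet u v == 0) && (0 < zdot u v).

Definition balanced_family (n : nat) (a : 'I_n -> zvec) : Prop :=
  \sum_i (a i).1 = 0 /\ \sum_i (a i).2 = 0.

Definition nondegenerate_family (n : nat) (a : 'I_n -> zvec) : Prop :=
  exists i j, zdet (a i) (a j) != 0.

Definition even_family (n : nat) (a : 'I_n -> zvec) : Prop :=
  forall i, (2 %| (a i).1)%Z /\ (2 %| (a i).2)%Z.

(* k_j : the element a j of Delta has lattice length 2 k_j *)
Definition kk (n : nat) (a : 'I_n -> zvec) (j : 'I_n) : nat := (latlen (a j)) %/ 2.

Definition k0 (n : nat) (a : 'I_n -> zvec) : nat := \big[gcdn/0%N]_(j < n) kk a j.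

(* lattice length of the side sigma of P_Delta having a j as outer normal *)
Definition side_latlen (n : nat) (a : 'I_n -> zvec) (j : 'I_n) : nat :=
  \sum_(i | same_dir (a i) (a j)) latlen (a i).

(* euclidean length of that side *)
Definition side_len (R : realType) (n : nat) (a : 'I_n -> zvec) (j : 'I_n) : R :=
  \sum_(i | same_dir (a i) (a j))
     Num.sqrt (((a i).1 ^+ 2 + (a i).2 ^+ 2)%:~R).

Definition lam (R : realType) (l1 l2 : R) (v : zvec) : R :=
  l1 * (v.1)%:~R + l2 * (v.2)%:~R.

Definition rot90 (v : zvec) : zvec := (- v.2, v.1).

(* the side with outer normal a j lies on the broken line B' iff lambda increases
   along its counterclockwise orientation (the other sides form B'') *)
Definition in_B' (R : realType) (l1 l2 : R) (n : nat) (a : 'I_n -> zvec)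
   (j : 'I_n) : bool := 0 < lam l1 l2 (rot90 (a j)).

(* moment map of the toric curve of the segment [0,L] on the positive half-axis,
   in lattice units:  xi |-> (sum_j j xi^j) / (sum_j xi^j) *)
Definition mom (R : realType) (L : nat) (xi : R) : R :=
  (\sum_(j < L.+1) (j%:R * xi ^+ j)) / (\sum_(j < L.+1) xi ^+ j).

(* euclidean distance, from the lambda-minimal endpoint of the side of a j, of the
   point of Tor^+_R(sigma) with coordinate xi > 0 *)
Definition pos_on_side (R : realType) (n : nat) (a : 'I_n -> zvec) (j : 'I_n)
   (xi : R) : R :=
  side_len R a j / (side_latlen a j)%:R * mom (side_latlen a j) xi.

(* Men^rho_R(Delta), as a subset of prod_j [0, |sigma_j|] in R^n: coordinate j is
   the distance of the point z_j from the lambda-minimal endpoint of its side *)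
Definition Men_rho (R : realType) (l1 l2 : R) (n : nat) (a : 'I_n -> zvec)
   (rho : R) : set 'rV[R]_n :=
  [set t | exists xi : 'I_n -> R,
     [/\ forall j, 0 < xi j,
         \prod_(j | in_B' l1 l2 a j) xi j ^+ (kk a j %/ k0 a)
           = \prod_(j | ~~ in_B' l1 l2 a j) xi j ^+ (kk a j %/ k0 a),
         forall j, t ord0 j = pos_on_side a j (xi j) &
         forall j, rho <= t ord0 j /\ rho <= side_len R a j - t ord0 j]].

(* On a side of lattice length L, the moment map of the toric curve reads, in
   the logarithmic coordinate u = ln xi, E(u) = sum_j j e^(ju) / sum_j e^(ju).
   Its derivative is a variance, hence positive, and E(-u) = L - E(u), so E is
   a diffeomorphism of R onto ]0, L[.  Through the inverse of E, scaled by the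
   signed exponents +-k_i/k_0, the points of Men^rho_R(Delta) get coordinates
   w_i in which the monomial equation becomes the hyperplane sum_i w_i = 0 and
   the rho-conditions become a box.  The intersection of a box with a
   hyperplane is closed, so Men^rho_R(Delta) is its own closure, and it is the
   convex hull of its points having at most one coordinate strictly inside its
   bounds: any other point lies on a segment, in direction e_p - e_q, between
   two points with fewer such coordinates. *)

From HB Require Import structures.
From mathcomp Require Import all_boot all_order all_algebra.
From mathcomp Require Import all_classical all_reals all_analysis.
From mathcomp Require Import ring lra.
Import Order.TTheory GRing.Theory Num.Theory.
Import numFieldNormedType.Exports.
Local Open Scope ring_scope.
Local Open Scope classical_set_scope.
Set Implicit Arguments.
Unset Strict Implicit.
Unset Printing Implicit Defensive.

Section Ck.
Variable R : realType.
Implicit Types (I J : set R) (f g : R -> R).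

Fixpoint Ck (k : nat) I f : Prop :=
  match k with
  | 0 => forall x, I x -> {for x, continuous f}
  | k.+1 => (forall x, I x -> derivable f x 1) /\ Ck k I f^`()
  end.

Definition smooth1 I f := forall k, Ck k I f.

Lemma Ck_cont k I f : Ck k I f -> forall x, I x -> {for x, continuous f}.
Proof.
case: k => [//|k] [df _] x Ix.
exact/differentiable_continuous/derivable1_diffP/df.
Qed.

Lemma CkW k I f : Ck k.+1 I f -> Ck k I f.
Proof.
elim: k f => [|k IH] f; first exact: Ck_cont.
by move=> [df Cf']; split => //; apply: IH.
Qed.

Lemma Ck_derive1n m k I f : Ck (k + m) I f -> Ck m I f^`(k).
Proof.
elim: k f => [|k IH] f; first by rewrite add0n derive1n0.
by rewrite addSn derive1Sn => -[_ /IH].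
Qed.

Lemma Ck_eq_on k I f g : open I -> (forall x, I x -> f x = g x) ->
  Ck k I f -> Ck k I g.
Proof.
move=> oI; elim: k f g => [|k IH] f g fg;
    have nfg x : I x -> \forall y \near x, f y = g y
      by move=> Ix; apply: filterS (oI x Ix) => y /fg.
  move=> cf x Ix; rewrite /prop_for /continuous_at -(fg x Ix).
  exact: cvg_trans (near_eq_cvg (nfg x Ix)) (cf x Ix).
move=> [df Cf']; split=> [x Ix|]; first exact: near_eq_derivable (nfg x Ix) (df x Ix).
by apply: IH Cf' => x Ix; rewrite !derive1E; apply/near_eq_derive/nfg.
Qed.

Lemma Ck_cst k I (c : R) : Ck k I (fun=> c).
Proof.
elim: k c => [|k IH] c; first by move=> x _; exact: cvg_cst.
split=> [x _|]; first exact: derivable_cst.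
suff -> : (fun=> c)^`() = (fun=> 0) :> (R -> R) by [].
by apply/funext => x; rewrite derive1E derive_cst.
Qed.

Lemma Ck_id k I : Ck k I id.
Proof.
case: k => [|k]; first by move=> x _; exact: cvg_id.
split=> [x _|]; first exact: derivable_id.
suff -> : (@id R)^`() = (fun=> 1) by exact: Ck_cst.
by apply/funext => x; rewrite derive1E derive_id.
Qed.

Lemma CkD k I f g : open I -> Ck k I f -> Ck k I g -> Ck k I (fun x => f x + g x).
Proof.
move=> oI; elim: k f g => [|k IH] f g.
  by move=> cf cg x Ix; apply: continuousD; [exact: cf | exact: cg].
move=> [df Cf'] [dg Cg']; split=> [x Ix|].
  by apply: derivableD; [exact: df | exact: dg].
apply: Ck_eq_on oI _ (IH _ _ Cf' Cg') => x Ix.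
by rewrite !derive1E -[fun x => _]/(f + g) deriveD //; [exact: df | exact: dg].
Qed.

Lemma CkM k I f g : open I -> Ck k I f -> Ck k I g -> Ck k I (fun x => f x * g x).
Proof.
move=> oI; elim: k f g => [|k IH] f g.
  by move=> cf cg x Ix; apply: continuousM; [exact: cf | exact: cg].
move=> Cf Cg; have Cf1 := CkW Cf; have Cg1 := CkW Cg.
move: Cf Cg => [df Cf'] [dg Cg']; split=> [x Ix|].
  by apply: derivableM; [exact: df | exact: dg].
apply: Ck_eq_on oI _ (CkD oI (IH _ _ Cf1 Cg') (IH _ _ Cf' Cg1)) => x Ix.
rewrite !derive1E -[fun x => _]/(f * g) deriveM; [|exact: df | exact: dg].
by rewrite /GRing.scale /= [g x * _]mulrC.
Qed.

Lemma CkV k I f : open I -> (forall x, I x -> f x != 0) ->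
  Ck k I f -> Ck k I (fun x => (f x)^-1).
Proof.
move=> oI f0; elim: k f f0 => [|k IH] f f0.
  by move=> cf x Ix; apply: continuousV; [exact: f0 | exact: cf].
move=> Cf; have /(IH _ f0) CVf := CkW Cf; move: Cf => [df Cf']; split=> [x Ix|].
  by apply: derivableV; [exact: f0 | exact: df].
have := CkM oI (CkM oI (Ck_cst k I (-1)) Cf') (CkM oI CVf CVf).
apply: Ck_eq_on => // x Ix; rewrite !derive1E deriveV; [|exact: f0 | exact: df].
by rewrite /GRing.scale /= -invfM -expr2 mulN1r !mulNr mulrC.
Qed.

Lemma Ck_comp k I J f g : open I -> open J -> (forall x, I x -> J (g x)) ->
  Ck k J f -> Ck k I g -> Ck k I (fun x => f (g x)).
Proof.
move=> oI oJ gIJ; elim: k f g gIJ => [|k IH] f g gIJ.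
  by move=> cf cg x Ix; apply: continuous_comp; [exact: cg | exact: cf (gIJ _ Ix)].
move=> Cf Cg; have Cf1 := CkW Cf; have Cg1 := CkW Cg.
move: Cf Cg => [df Cf'] [dg Cg']; split=> [x Ix|].
  apply/derivable1_diffP/differentiable_comp; first exact/derivable1_diffP/dg.
  exact/derivable1_diffP/df/gIJ.
apply: Ck_eq_on oI _ (CkM oI (IH _ _ gIJ Cf' Cg1) Cg') => x Ix.
rewrite -[fun x => f (g x)]/(f \o g) [RHS]derive1_comp //.
  exact: dg.
exact: df (gIJ _ Ix).
Qed.

Lemma Ck_sum k I n (F : 'I_n -> R -> R) : open I ->
  (forall i, Ck k I (F i)) -> Ck k I (fun x => \sum_(i < n) F i x).
Proof.
move=> oI; elim: n F => [|n IH] F CF.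
  by apply: Ck_eq_on oI _ (Ck_cst k I 0) => x _; rewrite big_ord0.
apply: Ck_eq_on oI _ (CkD oI (IH _ (fun i => CF (widen_ord (leqnSn n) i))) (CF ord_max)).
by move=> x _; rewrite big_ord_recr.
Qed.

Lemma Ck_expR k I : Ck k I expR.
Proof.
have expR' : (@expR R)^`() = expR.
  by apply/funext => x; rewrite derive1E derive_val.
elim: k => [|k IH]; first by move=> x _; exact: continuous_expR.
by split=> [x _|]; [exact: derivable_expR | rewrite expR'].
Qed.

(* The derivative of [g] is [1 / E' \o g], which is C^k whenever [g] is. *)
Lemma smooth1_inverse (E g : R -> R) J :
  open J -> smooth1 setT E -> (forall x, E^`() x != 0) ->
  cancel E g -> (forall y, J y -> E (g y) = y) -> smooth1 J g.
Proof.
move=> oJ sE E'0 Eg gE.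
have dg y : J y -> is_derive y 1 g (E^`()%classic (g y))^-1.
  move=> Jy; rewrite -{1}(gE y Jy); apply: is_derive_inverse (E'0 _).
  - by near=> z; rewrite Eg.
  - by near=> z; apply: (Ck_cont (sE 0%N)).
  - by have [/(_ (g y) I) /derivableP] := sE 1%N; rewrite -derive1E.
have sE' : smooth1 setT E^`() by move=> k; have [] := sE k.+1.
elim=> [|k IH].
  by move=> y /dg [/derivable1_diffP /differentiable_continuous].
split=> [y /dg []//|].
have := CkV oJ (fun y _ => E'0 (g y)) (Ck_comp oJ openT (fun _ _ => I) (sE' k) IH).
by apply: Ck_eq_on => // y /dg [_ <-]; rewrite derive1E.
Unshelve. all: by end_near.
Qed.

End Ck.

Lemma ler_term_sum (R : numDomainType) (I : finType) (F : I -> R) i :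
  (forall j, 0 <= F j) -> F i <= \sum_j F j.
Proof.
move=> F0; rewrite (bigD1 i) //= lerDl.
by apply: sumr_ge0 => j _; apply: F0.
Qed.

Lemma is_derive_expRM (R : realType) (c u : R) :
  is_derive u 1 (fun v => expR (c * v)) (c * expR (c * u)).
Proof.
have Dc : is_derive u 1 ( *%R c) c.
  have := is_deriveZ c (is_derive_id u (1 : R)).
  by rewrite [X in is_derive _ _ _ X]/GRing.scale /= mulr1.
by have := is_derive1_comp (is_derive_expR (c * u)) Dc; rewrite mulrC.
Qed.

Lemma double_sum_sqr_sub (R : comPzRingType) (I : finType) (x p : I -> R) :
  \sum_i \sum_j (x i - x j) ^+ 2 * (p i * p j) =
  2 * ((\sum_i x i ^+ 2 * p i) * (\sum_i p i) - (\sum_i x i * p i) ^+ 2).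
Proof.
have inner i : \sum_j (x i - x j) ^+ 2 * (p i * p j) =
    x i ^+ 2 * p i * \sum_j p j + p i * \sum_j x j ^+ 2 * p j
    - 2 * (x i * p i * \sum_j x j * p j).
  rewrite !mulr_sumr -big_split -sumrB /=.
  by apply: eq_bigr => j _; ring.
rewrite (eq_bigr _ (fun i _ => inner i)) sumrB big_split /= -!mulr_suml -mulr_sumr.
by rewrite -mulr_suml; ring.
Qed.

Section Moment.
Variables (R : realType) (L : nat).
Implicit Types u y : R.

Definition zpart (u : R) := \sum_(j < L.+1) expR (j%:R * u).
Definition zpart1 (u : R) := \sum_(j < L.+1) j%:R * expR (j%:R * u).
Definition zpart2 (u : R) := \sum_(j < L.+1) j%:R ^+ 2 * expR (j%:R * u).
Definition mom_exp (u : R) := mom L (expR u).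

Lemma mom_expE u : mom_exp u = zpart1 u / zpart u.
Proof.
by rewrite /mom_exp /mom; congr (_ / _); apply: eq_bigr => j _; rewrite expRM_natl.
Qed.

Lemma zpart_ge1 u : 1 <= zpart u.
Proof.
have := @ler_term_sum _ _ (fun j : 'I_L.+1 => expR (j%:R * u)) ord0 (fun _ => expR_ge0 _).
by rewrite mul0r expR0.
Qed.

Lemma zpart_gt0 u : 0 < zpart u.
Proof. exact: lt_le_trans ltr01 (zpart_ge1 u). Qed.

Lemma is_derive_zpart u : is_derive u 1 zpart (zpart1 u).
Proof.
rewrite /zpart /zpart1 -fct_sumE; apply: is_derive_sum => j.
exact: is_derive_expRM.
Qed.

Lemma is_derive_zpart1 u : is_derive u 1 zpart1 (zpart2 u).
Proof.
rewrite /zpart1 /zpart2 -fct_sumE; apply: is_derive_sum => j.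
have := is_deriveZ j%:R (is_derive_expRM j%:R u).
by rewrite /GRing.scale /= mulrA -expr2.
Qed.

Lemma is_derive_mom_exp u :
  is_derive u 1 mom_exp ((zpart2 u * zpart u - zpart1 u ^+ 2) / zpart u ^+ 2).
Proof.
have -> : mom_exp = zpart1 * (fun v => (zpart v)^-1).
  by apply/funext => v; rewrite mom_expE.
have Z0 : zpart u != 0 by rewrite gt_eqF ?zpart_gt0.
apply: is_derive_eq (is_deriveM (is_derive_zpart1 u) (is_deriveV Z0 (is_derive_zpart u))) _.
by rewrite /GRing.scale /=; field.
Qed.

Lemma mom_exp_smooth : smooth1 setT mom_exp.
Proof.
move=> k; have CexpRM j : Ck k setT (fun u => expR (j%:R * u)).
  exact: Ck_comp openT openT _ (Ck_expR _ _) (CkM openT (Ck_cst _ _ _) (Ck_id _ _)).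
have Cz : Ck k setT zpart by apply: Ck_sum openT _ => j; apply: CexpRM.
have Cz1 : Ck k setT zpart1.
  by apply: Ck_sum openT _ => j; apply: CkM openT (Ck_cst _ _ _) (CexpRM j).
have Cz' := CkV openT (fun u _ => lt0r_neq0 (zpart_gt0 u)) Cz.
by apply: Ck_eq_on openT _ (CkM openT Cz1 Cz') => u _; rewrite mom_expE.
Qed.

Lemma mom_exp_continuous : continuous mom_exp.
Proof. by move=> u; apply: Ck_cont (mom_exp_smooth 0) _ _. Qed.

Lemma zpart_opp u : zpart (- u) = expR (- (L%:R * u)) * zpart u.
Proof.
rewrite /zpart mulr_sumr [RHS](reindex_inj rev_ord_inj); apply: eq_bigr => j _.
rewrite -expRD /= subSS (natrB _ (ltn_ord j)); congr expR; ring.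
Qed.

Lemma zpart1_opp u :
  zpart1 (- u) = expR (- (L%:R * u)) * (L%:R * zpart u - zpart1 u).
Proof.
rewrite /zpart1 /zpart mulr_sumr -sumrB mulr_sumr [RHS](reindex_inj rev_ord_inj).
apply: eq_bigr => j _; rewrite /= subSS !(natrB _ (ltn_ord j)) -mulrBl mulrCA -expRD.
congr (_ * expR _); ring.
Qed.

Lemma mom_exp_opp u : mom_exp (- u) = L%:R - mom_exp u.
Proof.
rewrite !mom_expE zpart_opp zpart1_opp.
by field; rewrite !gt_eqF ?zpart_gt0 ?expR_gt0.
Qed.

Lemma zpart1_le u : u <= 0 -> zpart1 u <= (L.+1 * L)%:R * expR u.
Proof.
move=> u0; have -> : (L.+1 * L)%:R * expR u = \sum_(j < L.+1) L%:R * expR u.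
  by rewrite sumr_const card_ord -[RHS]mulr_natl natrM mulrA.
apply: ler_sum => j _; have [->|j0] := eqVneq (j : nat) 0%N.
  by rewrite mul0r mulr_ge0 ?expR_ge0.
apply: ler_pM; rewrite ?expR_ge0 ?ler_nat -1?ltnS //.
by rewrite ler_expR -[leRHS]mul1r ler_wnM2r // ler1n lt0n.
Qed.

Lemma mom_exp_le_zpart1 u : mom_exp u <= zpart1 u.
Proof.
rewrite mom_expE ler_pdivrMr ?zpart_gt0 // ler_peMr ?zpart_ge1 //.
by apply: sumr_ge0 => j _; rewrite mulr_ge0 ?expR_ge0.
Qed.

Lemma mom_exp_small y : 0 < y -> exists u, mom_exp u < y.
Proof.
move=> y0; pose c : R := (L.+1 * L)%:R.
pose u := Num.min 0 (ln (y / (c + 1))).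
have c1 : 0 < c + 1 by rewrite ltr_wpDl.
have u0 : u <= 0 by rewrite ge_min lexx.
have eu : expR u <= y / (c + 1).
  by rewrite -[leRHS]lnK ?posrE ?divr_gt0 // ler_expR ge_min lexx orbT.
exists u; apply: le_lt_trans (mom_exp_le_zpart1 u) _.
apply: le_lt_trans (zpart1_le u0) _.
apply: le_lt_trans (ler_wpM2l (ler0n _ _) eu) _.
by rewrite mulrA ltr_pdivrMr // mulrDr mulr1 mulrC ltrDl.
Qed.

Hypothesis L_gt0 : (0 < L)%N.

Lemma zpart_variance_gt0 u : 0 < zpart2 u * zpart u - zpart1 u ^+ 2.
Proof.
pose T (i j : 'I_L.+1) : R := (i%:R - j%:R) ^+ 2 * (expR (i%:R * u) * expR (j%:R * u)).
have T_ge0 i j : 0 <= T i j by rewrite mulr_ge0 ?sqr_ge0 ?mulr_ge0 ?expR_ge0.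
have i1 : (1 < L.+1)%N by [].
have : 0 < \sum_i \sum_j T i j.
  apply: lt_le_trans (ler_term_sum (Ordinal i1) (fun i => sumr_ge0 _ (fun j _ => T_ge0 i j))).
  apply: lt_le_trans (ler_term_sum ord0 (T_ge0 _)).
  by rewrite /T /= subr0 expr1n mul1r mulr_gt0 ?expR_gt0.
by rewrite double_sum_sqr_sub pmulr_rgt0.
Qed.

Lemma mom_exp'_gt0 u : 0 < mom_exp^`() u.
Proof.
rewrite derive1E; have [_ ->] := is_derive_mom_exp u; rewrite divr_gt0 ?zpart_variance_gt0 //.
by rewrite exprn_gt0 ?zpart_gt0.
Qed.

Lemma mom_exp_incr : {homo mom_exp : u v / u < v}.
Proof.
move=> u v uv; apply: (@gtr0_derive1_lt_cc _ mom_exp u v) => //.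
- by move=> x _; have [] := is_derive_mom_exp x.
- by move=> x _; apply: mom_exp'_gt0.
- exact/continuous_subspaceT/mom_exp_continuous.
- by rewrite in_itv /= lexx ltW.
- by rewrite in_itv /= lexx ltW.
Qed.

Lemma mom_exp_mono : {mono mom_exp : u v / u <= v}.
Proof. exact: le_mono mom_exp_incr. Qed.

Lemma mom_exp_inj : injective mom_exp.
Proof. exact: inc_inj mom_exp_mono. Qed.

Lemma mom_exp_gt0 u : 0 < mom_exp u.
Proof.
have i1 : (1 < L.+1)%N by [].
rewrite mom_expE divr_gt0 ?zpart_gt0 //; apply: lt_le_trans (ler_term_sum (Ordinal i1) _).
  by rewrite /= mul1r expR_gt0.
by move=> j; rewrite mulr_ge0 ?expR_ge0.
Qed.

Lemma mom_exp_ltL u : mom_exp u < L%:R.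
Proof. by rewrite -subr_gt0 -mom_exp_opp mom_exp_gt0. Qed.

Lemma mom_exp_large y : y < L%:R -> exists u, y < mom_exp u.
Proof.
rewrite -subr_gt0 => /mom_exp_small [u yu].
by exists (- u); rewrite mom_exp_opp ltrBrDl -ltrBrDr.
Qed.

(* Junk value [0] outside [`]0, L%:R[], the range of [mom_exp]. *)
Definition mom_exp_inv y := xget 0 [set u | mom_exp u = y].

Lemma mom_exp_invK : cancel mom_exp mom_exp_inv.
Proof.
move=> u; apply: mom_exp_inj.
exact: (xgetPex 0 (ex_intro [set v | mom_exp v = mom_exp u] u erefl)).
Qed.

Lemma mom_expK y : 0 < y < L%:R -> mom_exp (mom_exp_inv y) = y.
Proof.
move=> /andP[/mom_exp_small [u1 h1] /mom_exp_large [u2 h2]].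
have u12 : u1 <= u2 by rewrite -mom_exp_mono ltW // (lt_trans h1 h2).
have [c _ cy] : exists2 c, c \in `[u1, u2]%R & mom_exp c = y.
  apply: IVT => //; first exact/continuous_subspaceT/mom_exp_continuous.
  by rewrite ge_min le_max (ltW h1) (ltW h2) orbT.
exact: (xgetPex 0 (ex_intro [set v | mom_exp v = y] c cy)).
Qed.

Lemma mom_exp_inv_smooth : smooth1 `]0, L%:R[ mom_exp_inv.
Proof.
apply: smooth1_inverse mom_exp_smooth _ mom_exp_invK _; first exact: itv_open.
  by move=> u; rewrite gt_eqF ?mom_exp'_gt0.
by move=> y /=; rewrite in_itv /=; apply: mom_expK.
Qed.

Lemma mom_exp_inv_mono : {in `]0, L%:R[ &, {mono mom_exp_inv : x y / x <= y}}.
Proof.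
move=> x y; rewrite !inE /= !in_itv /= => /mom_expK {2}<- /mom_expK {2}<-.
by rewrite mom_exp_mono.
Qed.

End Moment.

Section Rowmap.
Variables (R : realType) (n : nat).
Implicit Types (x y v : 'rV[R]_n) (f : 'I_n -> R -> R).

Definition rowmap f x : 'rV[R]_n := \row_j f j (x ord0 j).

Lemma is_derive_coord_comp (H : R -> R) x v j : derivable H (x ord0 j) 1 ->
  is_derive x v (fun y => H (y ord0 j)) (H^`()%classic (x ord0 j) * v ord0 j).
Proof.
move=> dH.
(* The coordinate as a linear map, built as in the proof of [differentiable_coord]. *)
have @c : {linear 'rV[R]_n -> R^o}.
  by exists (fun y : 'rV[R]_n => y ord0 j); do 2![eexists]; do ?[constructor];
     rewrite ?mxE// => ? *; rewrite ?mxE//; move=> ?; rewrite !mxE.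
have dc : differentiable c x := differentiable_coord x ord0 j.
have dHc : differentiable H (c x) by apply/derivable1_diffP.
have dF : differentiable (H \o c) x by apply: differentiable_comp.
apply: DeriveDef; first exact: diff_derivable.
rewrite -[fun y => _]/(H \o c) deriveE // diff_comp // diff_lin ?diff1E //=.
  by rewrite mulrC.
exact: coord_continuous.
Qed.

Lemma is_derive_rowmap f x v : (forall j, derivable (f j) (x ord0 j) 1) ->
  is_derive x v (rowmap f) (\row_j ((f j)^`()%classic (x ord0 j) * v ord0 j)).
Proof.
move=> df; have rowE i j : (fun y => rowmap f y i j) = (fun y => f j (y ord0 j)).
  by apply/funext => y; rewrite mxE.
have dM : derivable (rowmap f) x v.
  apply/derivable_mxP => i j; rewrite rowE.
  by have [] := is_derive_coord_comp v (df j).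
apply: DeriveDef => //; rewrite derive_mx //; apply/matrixP => i j.
by rewrite !mxE rowE; have [_ ->] := is_derive_coord_comp v (df j).
Qed.

Lemma continuous_rowmap f x : (forall j, {for x ord0 j, continuous (f j)}) ->
  {for x, continuous (rowmap f)}.
Proof.
move=> cf; have FF : ProperFilter (nbhs x) := nbhs_pfilter x.
apply/(cvg_ballP (FF := FF)) => e e0.
have cj j : \forall y \near x, ball (f j (x ord0 j)) e (f j ((y : 'rV_n) ord0 j)).
  have := continuous_comp (@coord_continuous R 1 n ord0 j x) (cf j).
  by move/cvg_ballP => /(_ e e0).
have := @filter_forall _ _ (fun j (y : 'rV_n) => ball (f j (x ord0 j)) e (f j (y ord0 j))) _ FF cj.
by apply: filterS => y Hy; split => // i j; rewrite !mxE.
Qed.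

Section SmoothRowmap.
Variables (f : 'I_n -> R -> R) (I : 'I_n -> set R) (U : set 'rV[R]_n).
Hypotheses (oU : open U) (UI : forall x, U x -> forall j, I j (x ord0 j)).
Hypothesis f_smooth : forall j, smooth1 (I j) (f j).

Let der_row (vs : seq 'rV[R]_n) j s := (\prod_(v <- vs) v ord0 j) * (f j)^`(size vs)%classic s.

Let derivable_der_row vs j s : I j s -> derivable (der_row vs j) s 1.
Proof.
move=> Is; apply: derivableM; first exact: derivable_cst.
by case: (Ck_derive1n (f_smooth j (size vs + 1)%N)) => + _; apply.
Qed.

Let continuous_der_row vs j s : I j s -> {for s, continuous (der_row vs j)}.
Proof.
move=> Is; apply: continuousM; first exact: cvg_cst.
exact: (Ck_derive1n (f_smooth j (size vs + 0)%N)).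
Qed.

Lemma iter_dir_rowmap vs y : U y -> iter_dir vs (rowmap f) y = rowmap (der_row vs) y.
Proof.
elim: vs y => [|v vs IH] y Uy /=.
  by apply/matrixP => i j; rewrite !mxE /der_row big_nil mul1r.
have nIH : \forall z \near y, iter_dir vs (rowmap f) z = rowmap (der_row vs) z.
  by apply: filterS (_ : nbhs y U) => [z /IH //|]; apply: oU.
rewrite (near_eq_derive _ nIH).
have [_ ->] := is_derive_rowmap v (fun j => derivable_der_row (vs := vs) (UI Uy j)).
apply/matrixP => i j; rewrite !mxE /der_row big_cons derive1E deriveM ?derivable_cst //.
  by rewrite derive_cst /GRing.scale /= -derive1E; ring.
by case: (Ck_derive1n (f_smooth j (size vs + 1)%N)) => + _; apply; apply: UI.
Qed.

Lemma smooth_on_rowmap : smooth_on U (rowmap f).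
Proof.
split=> // vs x Ux.
have ng : \forall z \near x, rowmap (der_row vs) z = iter_dir vs (rowmap f) z.
  by apply: filterS (_ : nbhs x U) => [z /iter_dir_rowmap -> //|]; apply: oU.
split=> [|v].
  rewrite /prop_for /continuous_at (iter_dir_rowmap vs Ux).
  apply: cvg_trans (near_eq_cvg ng) _; apply: continuous_rowmap => j.
  exact: continuous_der_row (UI Ux j).
apply: near_eq_derivable ng _.
by have [] := is_derive_rowmap v (fun j => derivable_der_row (vs := vs) (UI Ux j)).
Qed.

End SmoothRowmap.

Lemma diffeomorphic_rowmap (M Q : set 'rV[R]_n) (f g : 'I_n -> R -> R)
    (I : 'I_n -> set R) :
  (forall j, smooth1 (I j) (f j)) -> (forall j, smooth1 setT (g j)) ->
  (forall x, M x -> exists U, [/\ open U, U x & forall y, U y -> forall j, I j (y ord0 j)]) ->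
  (forall x, M x -> Q (rowmap f x)) -> (forall y, Q y -> M (rowmap g y)) ->
  (forall x, M x -> forall j, g j (f j (x ord0 j)) = x ord0 j) ->
  (forall j, cancel (g j) (f j)) ->
  diffeomorphic M Q.
Proof.
move=> sf sg MU MQ QM gfK fgK; exists (rowmap f), (rowmap g); split => //.
- by move=> x Mx; apply/matrixP => i j; rewrite (ord1 i) !mxE gfK.
- by move=> y _; apply/matrixP => i j; rewrite (ord1 i) !mxE fgK.
split=> [x /MU [U [oU Ux UI]]|y _].
  by exists U, (rowmap f); split=> //; split=> //; apply: smooth_on_rowmap sf.
exists setT, (rowmap g); split=> //; split=> //.
exact: smooth_on_rowmap openT _ sg.
Qed.

End Rowmap.

Section ConvHull.
Variables (R : realFieldType) (n : nat).

Definition conv_hull (vs : seq 'rV[R]_n) : set 'rV[R]_n :=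
  [set x | exists w : 'I_(size vs) -> R,
     [/\ forall i, 0 <= w i, \sum_i w i = 1 & x = \sum_i w i *: vs`_(val i)]].

Lemma conv_hull_convex vs x y (l : R) : 0 <= l <= 1 ->
  conv_hull vs x -> conv_hull vs y -> conv_hull vs (l *: x + (1 - l) *: y).
Proof.
move=> /andP[l0 l1] [w [w0 w1 ->]] [w' [w'0 w'1 ->]].
exists (fun i => l * w i + (1 - l) * w' i); split.
- by move=> i; rewrite addr_ge0 ?mulr_ge0 ?subr_ge0 ?w0 ?w'0.
- by rewrite big_split /= -!mulr_sumr w1 w'1; lra.
- rewrite !scaler_sumr -big_split /=; apply: eq_bigr => i _.
  by rewrite [RHS]scalerDl !scalerA.
Qed.

Lemma mem_conv_hull vs x : x \in vs -> conv_hull vs x.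
Proof.
rewrite -index_mem => xvs; pose i0 := Ordinal xvs.
exists (fun i => (i == i0)%:R); split.
- by move=> i; rewrite ler0n.
- by rewrite (bigD1 i0) //= eqxx big1 ?addr0 // => i /negbTE ->.
rewrite (bigD1 i0) //= eqxx scale1r big1 ?addr0 ?nth_index // -?index_mem //.
by move=> i /negbTE ->; rewrite scale0r.
Qed.

End ConvHull.

Section BoxSlice.
Variables (R : realFieldType) (n : nat) (A B : 'I_n -> R).
Implicit Types w : 'rV[R]_n.

Definition box_slice : set 'rV[R]_n :=
  [set w | (forall j, A j <= w ord0 j <= B j) /\ \sum_j w ord0 j = 0].

Definition bound (b : {ffun 'I_n -> bool}) j := if b j then B j else A j.

(* A corner has every coordinate at a bound, except possibly one (the [Some i]
   of [p.1]), which is then fixed by the condition that the coordinates sum to 0. *)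
Definition corner (p : option 'I_n * {ffun 'I_n -> bool}) : 'rV[R]_n :=
  \row_j if p.1 is Some i then
           if j == i then - \sum_(k | k != i) bound p.2 k else bound p.2 j
         else bound p.2 j.

Definition corners : seq 'rV[R]_n :=
  [seq corner p | p <- enum {: option 'I_n * {ffun 'I_n -> bool}}
                & `[< box_slice (corner p) >]].

Definition free w : {set 'I_n} := [set j | A j < w ord0 j < B j].

Lemma mem_corners w : box_slice w -> (#|free w| <= 1)%N -> w \in corners.
Proof.
move=> [wb ws] free1; pose b := [ffun j => w ord0 j == B j].
have bound_nfree j : j \notin free w -> w ord0 j = bound b j.
  have /andP[Aw wB] := wb j.
  rewrite /bound ffunE inE => nf; case: eqP => // /eqP wNB.
  apply/eqP; rewrite eq_le Aw andbT leNgt; apply: contra nf => Alt.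
  by rewrite Alt lt_neqAle wNB.
suff [p wE] : exists p, w = corner p.
  apply/mapP; exists p => //; rewrite mem_filter mem_enum andbT.
  by apply/asboolP; rewrite -wE.
have [free0|[i fi]] := set_0Vmem (free w).
  exists (None, b); apply/matrixP => r j; rewrite (ord1 r) !mxE /=.
  by rewrite bound_nfree // free0 inE.
exists (Some i, b); apply/matrixP => r j; rewrite (ord1 r) !mxE /=.
have others k : k != i -> w ord0 k = bound b k.
  move=> ki; apply: bound_nfree; apply: contra ki => fk; apply/eqP.
  exact: (card_le1_eqP free1).
case: eqP => [->|/eqP]; last exact: others.
move/eqP: ws; rewrite (bigD1 i) //= addr_eq0 => /eqP ->.
by congr (- _); apply: eq_bigr => k /others.
Qed.

Lemma box_slice_shift w p q s : p != q -> box_slice w ->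
    p \in free w -> q \in free w ->
    A p <= w ord0 p + s <= B p -> A q <= w ord0 q - s <= B q ->
  let w' := w + s *: (delta_mx ord0 p - delta_mx ord0 q) in
  box_slice w' /\ free w' \subset free w.
Proof.
move=> pq [wb ws] fp fq hp hq w'.
have w'E j : w' ord0 j = w ord0 j + s * ((j == p)%:R - (j == q)%:R).
  by rewrite !mxE eqxx.
have sum_eq k : \sum_j ((j == k)%:R : R) = 1.
  by rewrite (bigD1 k) //= eqxx big1 ?addr0 // => j /negbTE ->.
split; first split.
- move=> j; rewrite w'E; have [->|jp] := eqVneq j p.
    by rewrite (negbTE pq) subr0 mulr1.
  have [->|jq] := eqVneq j q; first by rewrite sub0r mulrN1.
  by rewrite subrr mulr0 addr0.
- rewrite (eq_bigr _ (fun j _ => w'E j)) big_split /= -mulr_sumr sumrB.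
  by rewrite !sum_eq subrr mulr0 ws addr0.
- apply/fintype.subsetP => j; rewrite [in X in X -> _]inE w'E.
  have [->|jp] := eqVneq j p; first by [].
  have [->|jq] := eqVneq j q; first by [].
  by rewrite subrr mulr0 addr0 inE.
Qed.

Lemma free_proper w w' x : free w' \subset free w -> x \in free w ->
  w' ord0 x = A x \/ w' ord0 x = B x -> (#|free w'| < #|free w|)%N.
Proof.
move=> sub fx hx; apply/proper_card/properP; split => //; exists x => //.
by rewrite inE; case: hx => ->; rewrite ltxx ?andbF.
Qed.

(* Move along [e_p - e_q] in both directions until some coordinate hits a bound. *)
Lemma box_slice_split w : box_slice w -> (1 < #|free w|)%N ->
  exists w1 w2 (l : R), [/\ box_slice w1, box_slice w2,
    (#|free w1| < #|free w|)%N, (#|free w2| < #|free w|)%N &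
    0 <= l <= 1 /\ w = l *: w1 + (1 - l) *: w2].
Proof.
move=> Qw /card_gt1P [p [q [fp fq pq]]].
move: (fp) (fq); rewrite !inE => /andP[Ap pB] /andP[Aq qB].
pose d : 'rV[R]_n := delta_mx ord0 p - delta_mx ord0 q.
have dp s : (w + s *: d) ord0 p = w ord0 p + s.
  by rewrite !mxE !eqxx (negbTE pq) /= subr0 mulr1.
have dq s : (w + s *: d) ord0 q = w ord0 q - s.
  by rewrite !mxE !eqxx eq_sym (negbTE pq) /= sub0r mulrN1.
pose s1 := Num.min (B p - w ord0 p) (w ord0 q - A q).
pose s2 := Num.min (w ord0 p - A p) (B q - w ord0 q).
have s1p : s1 <= B p - w ord0 p by rewrite ge_min lexx.
have s1q : s1 <= w ord0 q - A q by rewrite ge_min lexx orbT.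
have s2p : s2 <= w ord0 p - A p by rewrite ge_min lexx.
have s2q : s2 <= B q - w ord0 q by rewrite ge_min lexx orbT.
have s1_gt0 : 0 < s1 by rewrite lt_min !subr_gt0 pB Aq.
have s2_gt0 : 0 < s2 by rewrite lt_min !subr_gt0 Ap qB.
have [Q1 sub1] : box_slice (w + s1 *: d) /\ free (w + s1 *: d) \subset free w.
  by apply: box_slice_shift => //; apply/andP; split; lra.
have [Q2 sub2] : box_slice (w + (- s2) *: d) /\ free (w + (- s2) *: d) \subset free w.
  by apply: box_slice_shift => //; apply/andP; split; lra.
exists (w + s1 *: d), (w + (- s2) *: d), (s2 / (s1 + s2)); split => //.
- have [le_pq|lt_qp] := leP (B p - w ord0 p) (w ord0 q - A q).
    by apply: free_proper sub1 fp _; right; rewrite dp /s1 minEle le_pq; ring.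
  by apply: free_proper sub1 fq _; left; rewrite dq /s1 minEle leNgt lt_qp /=; ring.
- have [le_pq|lt_qp] := leP (w ord0 p - A p) (B q - w ord0 q).
    by apply: free_proper sub2 fp _; left; rewrite dp /s2 minEle le_pq; ring.
  by apply: free_proper sub2 fq _; right; rewrite dq /s2 minEle leNgt lt_qp /=; ring.
split.
  by rewrite divr_ge0 ?ler_pdivrMr ?addr_gt0 //=; lra.
apply/matrixP => i j; rewrite !mxE; field; lra.
Qed.

Lemma box_slice_sub_conv_hull : box_slice `<=` conv_hull corners.
Proof.
move=> w Qw; have [m fm] : exists m, (#|free w| <= m)%N by exists #|free w|.
elim: m w fm Qw => [|m IH] w fm Qw.
  by apply/mem_conv_hull/mem_corners; last exact: leq_trans fm _.
have [f1|f2] := leqP #|free w| 1; first exact/mem_conv_hull/mem_corners.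
have [w1 [w2 [l [Q1 Q2 c1 c2 [l01 ->]]]]] := box_slice_split Qw f2.
by apply: conv_hull_convex l01 (IH _ _ Q1) (IH _ _ Q2); rewrite -ltnS;
  apply: leq_trans fm.
Qed.

Lemma conv_hull_corners_sub : conv_hull corners `<=` box_slice.
Proof.
move=> _ [c [c_ge0 c1 ->]].
have Qc (i : 'I_(size corners)) : box_slice corners`_i.
  have /mapP[p] := mem_nth 0 (ltn_ord i).
  by rewrite mem_filter => /andP[/asboolP Qp _] ->.
have xE j : (\sum_i c i *: corners`_i) ord0 j = \sum_i c i * corners`_i ord0 j.
  by rewrite summxE; apply: eq_bigr => i _; rewrite mxE.
split=> [j|].
  rewrite xE -[A j]mul1r -[B j]mul1r -c1 !mulr_suml.
  apply/andP; split; apply: ler_sum => i _;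
    by apply: ler_wpM2l => //; case: (Qc i) => /(_ j) /andP[].
rewrite (eq_bigr _ (fun j _ => xE j)) exchange_big /= big1 // => i _.
by rewrite -mulr_sumr; case: (Qc i) => _ ->; rewrite mulr0.
Qed.

End BoxSlice.

Lemma box_slice_polytope (R : realType) n (A B : 'I_n -> R) :
  convex_polytope (box_slice A B).
Proof.
exists (corners A B); apply/seteqP; split.
  exact: box_slice_sub_conv_hull.
exact: conv_hull_corners_sub.
Qed.

Lemma closure_mapsto_closed (T U : topologicalType) (S : set T) (C : set U)
    (h : T -> U) x :
  closed C -> (forall y, S y -> C (h y)) -> {for x, continuous h} ->
  closure S x -> C (h x).
Proof.
move=> cC SC hx Sx; apply: cC => N /hx /Sx [y [Sy Ny]].
by exists (h y); split => //; apply: SC.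
Qed.

Section RealFacts.
Variable R : realType.

Lemma mono_itv_minmax (h : R -> R) (D : set R) a b x :
  a \in D -> b \in D -> x \in D -> a <= b ->
  {in D &, {mono h : u v / u <= v}} \/ {in D &, {mono h : u v /~ u <= v}} ->
  (a <= x <= b) = (Num.min (h a) (h b) <= h x <= Num.max (h a) (h b)).
Proof.
move=> Da Db Dx ab [inc|dec]; first by rewrite minEle maxEle inc // ab !inc.
rewrite minEle maxEle dec //; have [ba|_] := leP b a; last by rewrite !dec // andbC.
have ab' : a = b by apply/eqP; rewrite eq_le ab ba.
by rewrite -ab' !dec // andbC.
Qed.

Lemma prod_expR_ln (I : finType) (P : pred I) (m : I -> nat) (xi : I -> R) :
  (forall i, 0 < xi i) ->
  \prod_(i | P i) xi i ^+ m i = expR (\sum_(i | P i) (m i)%:R * ln (xi i)).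
Proof.
by move=> xi0; rewrite expR_sum; apply: eq_bigr => i _; rewrite expRM_natl lnK ?posrE.
Qed.

Lemma monomial_eqE (I : finType) (P : pred I) (m : I -> nat) (xi : I -> R) :
  (forall i, 0 < xi i) ->
  (\prod_(i | P i) xi i ^+ m i = \prod_(i | ~~ P i) xi i ^+ m i) <->
  \sum_i (if P i then (m i)%:R else - (m i)%:R) * ln (xi i) = 0.
Proof.
move=> xi0; rewrite !prod_expR_ln //.
have -> : \sum_i (if P i then (m i)%:R else - (m i)%:R) * ln (xi i) =
    \sum_(i | P i) (m i)%:R * ln (xi i) - \sum_(i | ~~ P i) (m i)%:R * ln (xi i).
  rewrite (bigID P) /= -sumrN; congr (_ + _); apply: eq_bigr => i.
    by move=> ->.
  by move=> /negbTE ->; rewrite mulNr.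
by split=> [/expR_inj ->|/subr0_eq ->]; rewrite ?subrr.
Qed.

End RealFacts.

Section SideCoordinate.
Variables (R : realType) (L : nat) (len c : R).
Hypotheses (L_gt0 : (0 < L)%N) (len_gt0 : 0 < len) (c_neq0 : c != 0).

(* [len / L] converts lattice units of the side into euclidean length. *)
Definition pos_to_wlog (t : R) : R := c * mom_exp_inv L (t / (len / L%:R)).
Definition wlog_to_pos (w : R) : R := len / L%:R * mom_exp L (w / c).

Let unit_gt0 : 0 < len / L%:R. Proof. by rewrite divr_gt0 ?ltr0n. Qed.

Let unit_mulL : len / L%:R * L%:R = len.
Proof. by rewrite divfK // pnatr_eq0 -lt0n. Qed.

Lemma pos_to_mom_range t : 0 < t < len -> 0 < t / (len / L%:R) < L%:R.
Proof.
move=> /andP[t0 tl]; rewrite divr_gt0 //= ltr_pdivrMr //.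
by rewrite mulrC unit_mulL.
Qed.

Lemma wlog_to_posK : cancel wlog_to_pos pos_to_wlog.
Proof.
move=> w; rewrite /pos_to_wlog /wlog_to_pos [_ * mom_exp _ _]mulrC mulfK.
  by rewrite mom_exp_invK // mulrC divfK.
exact: lt0r_neq0.
Qed.

Lemma pos_to_wlogK t : 0 < t < len -> wlog_to_pos (pos_to_wlog t) = t.
Proof.
move=> ht; rewrite /wlog_to_pos /pos_to_wlog [c * _]mulrC mulfK //.
by rewrite mom_expK ?pos_to_mom_range // mulrC divfK ?lt0r_neq0.
Qed.

Lemma wlog_to_pos_range w : 0 < wlog_to_pos w < len.
Proof.
rewrite /wlog_to_pos mulr_gt0 ?mom_exp_gt0 //= -[ltRHS]unit_mulL ltr_pM2l //.
exact: mom_exp_ltL.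
Qed.

Lemma wlog_to_pos_ln xi : 0 < xi -> wlog_to_pos (c * ln xi) = len / L%:R * mom L xi.
Proof.
by move=> xi0; rewrite /wlog_to_pos [c * _]mulrC mulfK // /mom_exp lnK ?posrE.
Qed.

Lemma pos_to_wlog_mono :
  {in `]0, len[ &, {mono pos_to_wlog : u v / u <= v}} \/
  {in `]0, len[ &, {mono pos_to_wlog : u v /~ u <= v}}.
Proof.
pose G t := mom_exp_inv L (t / (len / L%:R)).
have inv_mono : {in `]0, len[ &, {mono G : u v / u <= v}}.
  move=> u v; rewrite !inE /= !in_itv /= => /pos_to_mom_range hu /pos_to_mom_range hv.
  by rewrite (mom_exp_inv_mono L_gt0) ?inE /= ?in_itv //= ler_pM2r ?invr_gt0.
have [c_gt0|c_lt0] := ltrP 0 c.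
  by left => u v Du Dv; rewrite /pos_to_wlog ler_pM2l // inv_mono.
right => u v Du Dv; rewrite /pos_to_wlog ler_nM2l ?inv_mono //.
by rewrite lt_neqAle c_neq0 c_lt0.
Qed.

Lemma pos_to_wlog_smooth : smooth1 `]0, len[ pos_to_wlog.
Proof.
move=> k; apply: CkM (itv_open _ _) (Ck_cst _ _ _) _.
apply: Ck_comp (itv_open _ _) (itv_open _ _) _ (mom_exp_inv_smooth R L_gt0 k) _.
  by move=> t /=; rewrite !in_itv /=; apply: pos_to_mom_range.
exact: CkM (itv_open _ _) (Ck_id _ _) (Ck_cst _ _ _).
Qed.

Lemma wlog_to_pos_smooth : smooth1 setT wlog_to_pos.
Proof.
move=> k; apply: CkM openT (Ck_cst _ _ _) _.
apply: Ck_comp openT openT (fun _ _ => I) (@mom_exp_smooth R L k) _.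
exact: CkM openT (Ck_id _ _) (Ck_cst _ _ _).
Qed.

End SideCoordinate.

Lemma latlen_gt0 (v : zvec) : v != (0, 0) -> (0 < latlen v)%N.
Proof. by case: v => x y; rewrite /latlen gcdn_gt0 !absz_gt0 xpair_eqE negb_and. Qed.

Lemma zdot_self_gt0 (v : zvec) : v != (0, 0) -> 0 < zdot v v.
Proof.
case: v => x y; rewrite xpair_eqE negb_and /zdot /= -!expr2 => nz.
by rewrite lt_def paddr_eq0 ?sqr_ge0 // !sqrf_eq0 negb_and nz addr_ge0 ?sqr_ge0.
Qed.

Lemma same_dir_refl (v : zvec) : v != (0, 0) -> same_dir v v.
Proof. by move=> nz; rewrite /same_dir /zdet mulrC subrr eqxx zdot_self_gt0. Qed.

Section Delta.
Variables (R : realType) (n : nat) (a : 'I_n -> zvec).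
Hypotheses (a_neq0 : forall i, a i != (0, 0)) (a_even : even_family a).

Lemma side_latlen_gt0 j : (0 < side_latlen a j)%N.
Proof.
rewrite /side_latlen (bigD1 j) ?same_dir_refl //=.
exact: leq_trans (latlen_gt0 (a_neq0 j)) (leq_addr _ _).
Qed.

Lemma side_len_gt0 j : 0 < side_len R a j.
Proof.
rewrite /side_len (bigD1 j) ?same_dir_refl //= ltr_wpDr ?sumr_ge0 //.
by rewrite sqrtr_gt0 ltr0z; have := zdot_self_gt0 (a_neq0 j); rewrite /zdot -!expr2.
Qed.

Lemma kk_div_k0_gt0 j : (0 < kk a j %/ k0 a)%N.
Proof.
have kk_gt0 i : (0 < kk a i)%N.
  rewrite /kk divn_gt0 // dvdn_leq ?latlen_gt0 //.
  by have [] := a_even i; rewrite !dvdzE /latlen dvdn_gcd => -> ->.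
have k0_kk : (k0 a %| kk a j)%N by rewrite /k0 (bigD1 j) //= dvdn_gcdl.
have k0_gt0 : (0 < k0 a)%N.
  by rewrite lt0n; apply: contraTneq k0_kk => ->; rewrite dvd0n -lt0n kk_gt0.
by rewrite divn_gt0 // dvdn_leq.
Qed.

End Delta.

Section MenRho.
Variables (R : realType) (n : nat) (a : 'I_n -> zvec) (l1 l2 rho : R).
Hypotheses (a_neq0 : forall i, a i != (0, 0)) (a_even : even_family a).
Hypotheses (rho_gt0 : 0 < rho) (side_wide : forall j, rho <= side_len R a j - rho).

Local Notation len j := (side_len R a j).

(* Signed exponents: the monomial equation of [Men_rho] says that
   [\sum_j men_weight j * ln xi_j = 0]. *)
Definition men_weight j : R :=
  if in_B' l1 l2 a j then (kk a j %/ k0 a)%:R else - (kk a j %/ k0 a)%:R.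

Definition men_wlog j := pos_to_wlog (side_latlen a j) (len j) (men_weight j).
Definition men_pos j := wlog_to_pos (side_latlen a j) (len j) (men_weight j).
Definition men_lo j := Num.min (men_wlog j rho) (men_wlog j (len j - rho)).
Definition men_hi j := Num.max (men_wlog j rho) (men_wlog j (len j - rho)).

Let L_gt0 j : (0 < side_latlen a j)%N. Proof. exact: side_latlen_gt0. Qed.
Let len_gt0 j : 0 < len j. Proof. exact: side_len_gt0. Qed.

Let weight_neq0 j : men_weight j != 0.
Proof.
by rewrite /men_weight; case: ifP; rewrite ?oppr_eq0 pnatr_eq0 -lt0n kk_div_k0_gt0.
Qed.

Let inside j t : rho <= t <= len j - rho -> 0 < t < len j.
Proof. by have := rho_gt0; move=> r0 /andP[h1 h2]; apply/andP; split; lra. Qed.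

Lemma Men_rhoE t : Men_rho l1 l2 a rho t <->
  (forall j, rho <= t ord0 j <= len j - rho) /\ \sum_j men_wlog j (t ord0 j) = 0.
Proof.
split=> [[xi [xi_gt0 monomial tE tb]]|[tb sum0]].
  split=> [j|]; first by have [] := tb j; move=> h1 h2; apply/andP; split; lra.
  have wlogE j : men_wlog j (t ord0 j) = men_weight j * ln (xi j).
    rewrite tE /pos_on_side /men_wlog -(wlog_to_pos_ln _ _ (weight_neq0 j)) //.
    by rewrite wlog_to_posK.
  rewrite (eq_bigr _ (fun j _ => wlogE j)).
  exact: (monomial_eqE _ _ xi_gt0).1 monomial.
pose xi j := expR (men_wlog j (t ord0 j) / men_weight j).
have lnE j : men_weight j * ln (xi j) = men_wlog j (t ord0 j).
  by rewrite expRK mulrC divfK.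
exists xi; split=> [j|||j]; first exact: expR_gt0.
- apply/(monomial_eqE _ _ (fun j => expR_gt0 _)).
  by rewrite (eq_bigr _ (fun j _ => lnE j)).
- move=> j; rewrite /pos_on_side -(wlog_to_pos_ln _ _ (weight_neq0 j)) ?expR_gt0 //.
  by rewrite lnE pos_to_wlogK ?inside.
- by have /andP[h1 h2] := tb j; split; lra.
Qed.

Lemma closed_Men_rho : closed (Men_rho l1 l2 a rho).
Proof.
move=> t Ct; have tb j : rho <= t ord0 j <= len j - rho.
  have := closure_mapsto_closed (@itv_closed _ _ rho (len j - rho)) _
    (@coord_continuous R 1 n ord0 j t) Ct.
  rewrite /= in_itv /=; apply=> y /Men_rhoE [+ _] => /(_ j).
  by rewrite /= in_itv.
apply/Men_rhoE; split => //.
apply: (closure_mapsto_closed (h := fun y : 'rV_n => \sum_j men_wlog j (y ord0 j))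
  (closed_eq (y := 0)) _ _ Ct) => [y /Men_rhoE [] //|].
apply: (cvg_big add_continuous (nbhs_filter t)) => j _.
apply: continuous_comp; first exact: coord_continuous.
have /inside tj := tb j.
by apply: Ck_cont (pos_to_wlog_smooth _ (L_gt0 j) (len_gt0 j) 0) _ _; rewrite /= in_itv.
Qed.

Lemma men_wlog_smooth j : smooth1 `]0, len j[ (men_wlog j).
Proof. exact: pos_to_wlog_smooth. Qed.

Lemma men_pos_smooth j : smooth1 setT (men_pos j).
Proof. exact: wlog_to_pos_smooth. Qed.

Lemma men_posK j : cancel (men_pos j) (men_wlog j).
Proof. exact: wlog_to_posK. Qed.

Lemma men_wlogK t : Men_rho l1 l2 a rho t ->
  forall j, men_pos j (men_wlog j (t ord0 j)) = t ord0 j.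
Proof. by move=> /Men_rhoE [tb _] j; apply: pos_to_wlogK; rewrite ?inside. Qed.

Lemma men_wlog_box j t : 0 < t < len j ->
  (rho <= t <= len j - rho) = (men_lo j <= men_wlog j t <= men_hi j).
Proof.
move=> tj; apply: (mono_itv_minmax (D := `]0, len j[)); rewrite ?inE /= ?in_itv //=.
- by apply: inside; rewrite lexx side_wide.
- by apply: inside; rewrite lexx side_wide.
- exact: pos_to_wlog_mono.
Qed.

Lemma Men_rho_to_box t : Men_rho l1 l2 a rho t ->
  box_slice men_lo men_hi (rowmap men_wlog t).
Proof.
move=> /Men_rhoE [tb sum0]; split=> [j|].
  by rewrite mxE -men_wlog_box ?tb ?inside.
by rewrite -[RHS]sum0; apply: eq_bigr => j _; rewrite mxE.
Qed.

Lemma box_to_Men_rho w : box_slice men_lo men_hi w ->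
  Men_rho l1 l2 a rho (rowmap men_pos w).
Proof.
move=> [wb sum0]; apply/Men_rhoE; split=> [j|].
  by rewrite mxE men_wlog_box ?wlog_to_pos_range // men_posK.
by rewrite -[RHS]sum0; apply: eq_bigr => j _; rewrite mxE men_posK.
Qed.

Lemma Men_rho_nbhs t : Men_rho l1 l2 a rho t ->
  exists U, [/\ open U, U t & forall y, U y -> forall j, `]0, len j[ (y ord0 j)].
Proof.
move=> /Men_rhoE [tb _]; exists (ball t (rho / 2)); split.
- exact: ball_open.
- exact/ballxx/divr_gt0.
move=> y [_ /(_ ord0)] ty j; have /andP[h1 h2] := tb j.
move: (ty j); rewrite -ball_normE /= ltr_norml in_itv /= => /andP[h3 h4].
by have := rho_gt0; move=> r0; apply/andP; split; lra.
Qed.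

End MenRho.

Theorem lemma2p3 (R : realType) (n : nat) (a : 'I_n -> zvec)
  (l1 l2 : R) (rho : R) :
  (forall i, a i != (0, 0)) ->
  balanced_family a -> nondegenerate_family a -> even_family a ->
  (forall p q : int, l1 * p%:~R + l2 * q%:~R = 0 -> p = 0 /\ q = 0) ->
  0 < rho ->
  (forall j, exists t : R,
      [/\ 0 <= t, t <= side_len R a j, rho <= t & rho <= side_len R a j - t]) ->
  exists (m : nat) (Q : set 'rV[R]_m),
    convex_polytope Q /\ diffeomorphic (closure (Men_rho l1 l2 a rho)) Q.
Proof.
move=> a_neq0 _ _ a_even _ rho_gt0 side_nonempty.
have side_wide j : rho <= side_len R a j - rho.
  by have [t [_ _ h1 h2]] := side_nonempty j; lra.
exists n, (box_slice (men_lo a l1 l2 rho) (men_hi a l1 l2 rho)).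
split; first exact: box_slice_polytope.
rewrite -(closure_id _).1; last exact: closed_Men_rho.
apply: (diffeomorphic_rowmap (men_wlog_smooth l1 l2 a_neq0) (men_pos_smooth a l1 l2)).
- exact: Men_rho_nbhs.
- exact: Men_rho_to_box.
- exact: box_to_Men_rho.
- exact: men_wlogK.
- exact: men_posK.
Qed.
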